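(* Let $A\subseteq2^{\mathbb N}$ be an analytic set containing no eventually constant sequence. Then there is a continuous map $H:2^{\mathbb N}\to[\mathbb N]$ with $H^{-1}(\mathcal L_A)=2^{\mathbb N}\setminus A$ (i.e. $2^{\mathbb N}\setminus A$ is Wadge reducible to $\mathcal L_A$). In particular, if $A$ is $\mathbf\Sigma^1_1$-complete then $\mathcal L_A$ is $\mathbf\Pi^1_1$-complete. Moreover, if $A$ is Borel then $\mathcal L_A$ is Borel.
   Context: Let $\leqslant$ be the lexicographical order on $2^{\mathbb N}$ and $<$ its strict part. For $x\in2^{\mathbb N}$ let $f^+_x=\chi_{\{y:x\leqslant y\}}$ and $f^-_x=\chi_{\{y:x<y\}}$ (functions on $2^{\mathbb N}$). Fix a bijection $h:2^{<\mathbb N}\to\mathbb N$ with $h(s)<h(t)$ whenever $|s|<|t|$, and let $(s_n)_n$ be the enumeration of $2^{<\mathbb N}$ given by $s_n=h^{-1}(n)$. For $s\in2^{<\mathbb N}$ let $x^0_s=s^\frown0^\infty$ and $x^1_s=s^\frown1^\infty$. Define $f_{4n}=f^+_{x^0_{s_n}}$, $f_{4n+1}=f^+_{x^1_{s_n}}$, $f_{4n+2}=f^-_{x^0_{s_n}}$, $f_{4n+3}=f^-_{x^1_{s_n}}$. $[\mathbb N]$ is the set of infinite subsets of $\mathbb N$ (Polish subspace of $2^{\mathbb N}$), and $\mathcal L_A=\{L\in[\mathbb N]:(f_n|_A)_{n\in L}\text{ converges pointwise on }A\}$. A set is $\mathbf\Sigma^1_1$-complete (resp. $\mathbf\Pi^1_1$-complete)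 if it is $\mathbf\Sigma^1_1$ (resp. $\mathbf\Pi^1_1$) and every $\mathbf\Sigma^1_1$ (resp. $\mathbf\Pi^1_1$) subset of a Polish space is Borel reducible to it. *)

From Stdlib Require Import Reals List Classical ClassicalEpsilon.
Open Scope R_scope.

Definition cantor := nat -> bool.
Definition baire := nat -> nat.

Definition agree {T} (n : nat) (x y : nat -> T) : Prop :=
  forall k, (k < n)%nat -> x k = y k.

Definition open_cantor (U : cantor -> Prop) : Prop :=
  forall x, U x -> exists n, forall y, agree n x y -> U y.

Inductive borel {T : Type} (op : (T -> Prop) -> Prop) : (T -> Prop) -> Prop :=
  | borel_open : forall U, op U -> borel op U
  | borel_compl : forall B, borel op B -> borel op (fun x => ~ B x)
  | borel_cunion : forall Bs : nat -> T -> Prop,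
      (forall n, borel op (Bs n)) -> borel op (fun x => exists n, Bs n x)
  | borel_ext : forall B C, borel op B -> (forall x, B x <-> C x) -> borel op C.

Definition borel_cantor : (cantor -> Prop) -> Prop := borel open_cantor.

Definition borel_in (Y P : cantor -> Prop) : Prop :=
  exists B, borel_cantor B /\ forall x, P x <-> (Y x /\ B x).

(** [N]: infinite subsets of N, as characteristic functions *)
Definition infinite_set (L : cantor) : Prop :=
  forall m, exists n, (m <= n)%nat /\ L n = true.

Definition cont_cc (H : cantor -> cantor) : Prop :=
  forall x n, exists m, forall y, agree m x y -> agree n (H x) (H y).
Definition cont_bc (f : baire -> cantor) : Prop :=
  forall a n, exists m, forall b, agree m a b -> agree n (f a) (f b).

Definition analytic_in (Y S : cantor -> Prop) : Prop :=
  (forall x, ~ S x) \/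
  exists f : baire -> cantor, cont_bc f /\ (forall a, Y (f a)) /\
    forall x, S x <-> exists a, f a = x.
Definition analytic_cantor (S : cantor -> Prop) : Prop :=
  analytic_in (fun _ => True) S.
Definition coanalytic_in (Y P : cantor -> Prop) : Prop :=
  (forall x, P x -> Y x) /\ analytic_in Y (fun x => Y x /\ ~ P x).

Record Polish := {
  pt :> Type;
  dist : pt -> pt -> R;
  dist_nonneg : forall x y, 0 <= dist x y;
  dist_refl : forall x, dist x x = 0;
  dist_sep : forall x y, dist x y = 0 -> x = y;
  dist_sym : forall x y, dist x y = dist y x;
  dist_tri : forall x y z, dist x z <= dist x y + dist y z;
  complete : forall u : nat -> pt,
    (forall eps, eps > 0 -> exists N, forall n m, (n >= N)%nat -> (m >= N)%nat ->
        dist (u n) (u m) < eps) ->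
    exists l, forall eps, eps > 0 -> exists N, forall n, (n >= N)%nat -> dist (u n) l < eps;
  separable : forall x0 : pt, exists D : nat -> pt,
    forall x eps, eps > 0 -> exists n, dist x (D n) < eps
}.

Definition open_in (X : Polish) (U : X -> Prop) : Prop :=
  forall x, U x -> exists eps, eps > 0 /\ forall y, dist X x y < eps -> U y.
Definition borel_X (X : Polish) : (X -> Prop) -> Prop := borel (open_in X).

Definition cont_bX (X : Polish) (f : baire -> X) : Prop :=
  forall a eps, eps > 0 -> exists m, forall b, agree m a b -> dist X (f a) (f b) < eps.
Definition analytic_X (X : Polish) (S : X -> Prop) : Prop :=
  (forall x, ~ S x) \/
  exists f : baire -> X, cont_bX X f /\ forall x, S x <-> exists a, f a = x.
Definition coanalytic_X (X : Polish) (S : X -> Prop) : Prop :=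
  analytic_X X (fun x => ~ S x).

Definition borel_map (X : Polish) (f : X -> cantor) : Prop :=
  forall U, open_cantor U -> borel_X X (fun x => U (f x)).

Definition Sigma11_complete (A : cantor -> Prop) : Prop :=
  analytic_cantor A /\
  forall (X : Polish) (B : X -> Prop), analytic_X X B ->
    exists f : X -> cantor, borel_map X f /\ forall x, B x <-> A (f x).

Definition Pi11_complete_in (Y P : cantor -> Prop) : Prop :=
  coanalytic_in Y P /\
  forall (X : Polish) (B : X -> Prop), coanalytic_X X B ->
    exists f : X -> cantor, borel_map X f /\ (forall x, Y (f x)) /\
      forall x, B x <-> P (f x).

Definition lex_lt (x y : cantor) : Prop :=
  exists n, agree n x y /\ x n = false /\ y n = true.
Definition lex_le (x y : cantor) : Prop := lex_lt x y \/ forall k, x k = y k.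

Definition chi (P : Prop) : R :=
  if excluded_middle_informative P then 1 else 0.

Definition fplus (x : cantor) : cantor -> R := fun y => chi (lex_le x y).
Definition fminus (x : cantor) : cantor -> R := fun y => chi (lex_lt x y).

Definition x0s (s : list bool) : cantor :=
  fun k => if Nat.ltb k (length s) then nth k s false else false.
Definition x1s (s : list bool) : cantor :=
  fun k => if Nat.ltb k (length s) then nth k s false else true.

(** The sequence (f_n), for an enumeration hinv = h^{-1} of 2^{<N} *)
Definition fseq (hinv : nat -> list bool) (n : nat) : cantor -> R :=
  let s := hinv (n / 4)%nat in
  match (n mod 4)%nat with
  | 0%nat => fplus (x0s s)
  | 1%nat => fplus (x1s s)
  | 2%nat => fminus (x0s s)
  | _ => fminus (x1s s)
  end.

(** Convergence of (f_n|_A)_{n in L} pointwise on A (L infinite, so the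
    subsequence is indexed by L in increasing order) *)
Definition LA (hinv : nat -> list bool) (A : cantor -> Prop) (L : cantor) : Prop :=
  infinite_set L /\
  forall y, A y -> exists l : R, forall eps, eps > 0 ->
    exists N, forall n, L n = true -> (N <= n)%nat -> Rabs (fseq hinv n y - l) < eps.

Definition eventually_constant (x : cantor) : Prop :=
  exists N b, forall n, (N <= n)%nat -> x n = b.

From Stdlib Require Import Reals List Lra Lia Wf_nat Classical ClassicalEpsilon FunctionalExtensionality.
Import ListNotations.
Local Open Scope nat_scope.

(* Each f_n is the indicator of a ray of the lexicographic order whose endpoint
   [threshold n] is eventually constant.  So at a point y of A (never eventually
   constant) f_n y is locally constant in y and equals 1 iff [threshold n] < y;
   the subsequence (f_n y)_{n in L} diverges iff it [oscillates], i.e. L has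
   infinitely many thresholds on both sides of y ([LA_iff], [oscillates_iff_between]).  Then, for a
   fixed enumeration h of 2^{<N}: the continuous [reduction] x |-> {4h(s), 4h(s)+1 :
   s initial segment of x}, along which oscillation happens exactly at x; the
   continuous map [coded_set] from N^N onto [N] \ L_A (coanalyticity); and Borel
   selectors [least_above]/[greatest_below] which, with a countable dense subset of
   A, reduce "oscillation at some point of A" to countably many Borel conditions. *)

Fixpoint prefix {T} (x : nat -> T) (n : nat) : list T :=
  match n with 0 => [] | S n => prefix x n ++ [x n] end.

Lemma prefix_length {T} (x : nat -> T) n : length (prefix x n) = n.
Proof. induction n; simpl; auto. rewrite length_app, IHn; simpl; lia. Qed.

Lemma prefix_nth {T} (x : nat -> T) n i d : i < n -> nth i (prefix x n) d = x i.
Proof.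
  induction n; intros Hi; [lia|]. simpl.
  destruct (Nat.eq_dec i n) as [ ->|Hne].
  - rewrite app_nth2, prefix_length, Nat.sub_diag; [reflexivity|rewrite prefix_length; lia].
  - rewrite app_nth1 by (rewrite prefix_length; lia). apply IHn; lia.
Qed.

Lemma nth_prefix_app {T} (y : nat -> T) i t k d : k < i -> nth k (prefix y i ++ t) d = y k.
Proof. intros Hk. rewrite app_nth1 by (rewrite prefix_length; auto). apply prefix_nth; auto. Qed.

Lemma nth_prefix_app_at {T} (y : nat -> T) i b t d : nth i (prefix y i ++ b :: t) d = b.
Proof. rewrite app_nth2, prefix_length, Nat.sub_diag; auto. rewrite prefix_length; auto. Qed.

Lemma prefix_agree {T} (x y : nat -> T) n : agree n x y -> prefix x n = prefix y n.
Proof.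
  induction n; intros H; simpl; auto.
  rewrite IHn, (H n); auto. intros k Hk; apply H; lia.
Qed.

Lemma agree_of_prefix {T} (x y : nat -> T) n : prefix x n = prefix y n -> agree n x y.
Proof.
  intros H k Hk. rewrite <- (prefix_nth x n k (x 0)), <- (prefix_nth y n k (x 0)), H; auto.
Qed.

Lemma prefix_firstn {T} (y : nat -> T) m n : m <= n -> firstn m (prefix y n) = prefix y m.
Proof.
  induction n; intros Hm.
  - replace m with 0 by lia; auto.
  - destruct (Nat.eq_dec m (S n)) as [ ->|Hne].
    + apply firstn_all2. rewrite prefix_length; auto.
    + simpl. rewrite firstn_app, prefix_length. replace (m - n) with 0 by lia.
      rewrite app_nil_r. apply IHn; lia.
Qed.

Lemma agree_mono {T} n m (x y : nat -> T) : m <= n -> agree n x y -> agree m x y.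
Proof. intros Hm H k Hk; apply H; lia. Qed.

Lemma agree_sym {T} n (x y : nat -> T) : agree n x y -> agree n y x.
Proof. intros H k Hk; symmetry; auto. Qed.

Definition near {T} (x : nat -> T) (P : (nat -> T) -> Prop) : Prop :=
  exists m, forall y, agree m x y -> P y.

Lemma near_forall_lt {T} (x : nat -> T) (Q : nat -> (nat -> T) -> Prop) n :
  (forall k, k < n -> near x (Q k)) -> near x (fun y => forall k, k < n -> Q k y).
Proof.
  induction n; intros H.
  - exists 0. intros; lia.
  - destruct IHn as [m1 Hm1]; [intros k Hk; apply H; lia|].
    destruct (H n) as [m2 Hm2]; [lia|].
    exists (max m1 m2). intros y Ha k Hk.
    destruct (Nat.eq_dec k n) as [ ->|Hne].
    + apply Hm2. apply (agree_mono (max m1 m2)); auto; lia.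
    + apply Hm1; [apply (agree_mono (max m1 m2)); auto; lia|lia].
Qed.

Lemma near_coord {T} (x : nat -> T) k : near x (fun y => y k = x k).
Proof. exists (S k). intros y Ha. symmetry; apply Ha; lia. Qed.

Lemma div_mod_affine q a r : r < q -> (q * a + r) / q = a /\ (q * a + r) mod q = r.
Proof.
  intros Hr. replace (q * a + r) with (r + a * q) by lia.
  rewrite Nat.div_add, Nat.div_small, Nat.Div0.mod_add, Nat.mod_small by lia. lia.
Qed.

Lemma first_diff (x y : cantor) : x <> y -> exists j, x j <> y j /\ agree j x y.
Proof.
  intros Hxy. assert (Hk : exists k, x k <> y k).
  { apply NNPP. intros Hn. apply Hxy, functional_extensionality. intros k.
    apply NNPP. intros Hk. apply Hn. eauto. }
  destruct Hk as [k Hk]. induction k as [k IH] using lt_wf_ind.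
  destruct (classic (agree k x y)) as [Ha|Ha]; [exists k; auto|].
  apply not_all_ex_not in Ha. destruct Ha as [i Hi].
  apply imply_to_and in Hi. destruct Hi as [Hi1 Hi2]. apply (IH i); auto.
Qed.

Lemma lex_trich (x y : cantor) : lex_lt x y \/ lex_lt y x \/ x = y.
Proof.
  destruct (classic (x = y)) as [H|H]; [auto|].
  destruct (first_diff x y H) as [j [Hj Ha]].
  destruct (x j) eqn:E1, (y j) eqn:E2; try congruence.
  - right; left. exists j. auto using agree_sym.
  - left. exists j. auto.
Qed.

Lemma lex_lt_trans x y z : lex_lt x y -> lex_lt y z -> lex_lt x z.
Proof.
  intros [n [Hn [H1 H2]]] [m [Hm [H3 H4]]].
  destruct (Nat.lt_trichotomy n m) as [Hl|[ ->|Hl]].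
  - exists n. repeat split; auto.
    + intros k Hk. rewrite Hn by auto. apply Hm; lia.
    + rewrite <- Hm; auto.
  - congruence.
  - exists m. repeat split; auto.
    + intros k Hk. rewrite Hn by lia. apply Hm; lia.
    + rewrite Hn; auto.
Qed.

Lemma lex_lt_irrefl x : ~ lex_lt x x.
Proof. intros [n [_ [H1 H2]]]. congruence. Qed.

Lemma lex_lt_asym x y : lex_lt x y -> ~ lex_lt y x.
Proof. intros H1 H2. apply (lex_lt_irrefl x). eapply lex_lt_trans; eauto. Qed.

Lemma lex_le_iff x y : lex_le x y <-> ~ lex_lt y x.
Proof.
  split.
  - intros [H|H] H'.
    + apply (lex_lt_asym _ _ H H').
    + apply (lex_lt_irrefl x). replace y with x in H' at 1; auto.
      apply functional_extensionality; auto.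
  - intros H. destruct (lex_trich x y) as [H1|[H1| ->]]; [left; auto|tauto|right; auto].
Qed.

Lemma lex_lt_near_r x y : lex_lt x y -> near y (lex_lt x).
Proof.
  intros [n [Hn [H1 H2]]]. exists (S n). intros y' Ha. exists n. repeat split; auto.
  - intros k Hk. rewrite Hn by auto. apply Ha; lia.
  - rewrite <- Ha by lia. auto.
Qed.

Lemma lex_lt_near_l x y : lex_lt y x -> near y (fun z => lex_lt z x).
Proof.
  intros [n [Hn [H1 H2]]]. exists (S n). intros y' Ha. exists n. repeat split; auto.
  - intros k Hk. rewrite <- Hn by auto. symmetry; apply Ha; lia.
  - rewrite <- Ha by lia. auto.
Qed.

Lemma x0s_lt s k : k < length s -> x0s s k = nth k s false.
Proof. intros H; unfold x0s. rewrite (proj2 (Nat.ltb_lt _ _) H); auto. Qed.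
Lemma x0s_ge s k : length s <= k -> x0s s k = false.
Proof. intros H; unfold x0s. rewrite (proj2 (Nat.ltb_ge _ _) H); auto. Qed.
Lemma x1s_lt s k : k < length s -> x1s s k = nth k s false.
Proof. intros H; unfold x1s. rewrite (proj2 (Nat.ltb_lt _ _) H); auto. Qed.
Lemma x1s_ge s k : length s <= k -> x1s s k = true.
Proof. intros H; unfold x1s. rewrite (proj2 (Nat.ltb_ge _ _) H); auto. Qed.

Lemma x0s_prefix (x : cantor) n : agree n x (x0s (prefix x n)).
Proof. intros k Hk. rewrite x0s_lt, prefix_nth; auto. rewrite prefix_length; auto. Qed.
Lemma x1s_prefix (x : cantor) n : agree n x (x1s (prefix x n)).
Proof. intros k Hk. rewrite x1s_lt, prefix_nth; auto. rewrite prefix_length; auto. Qed.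

Lemma x0s_ec s : eventually_constant (x0s s).
Proof. exists (length s), false. intros n Hn. apply x0s_ge; auto. Qed.
Lemma x1s_ec s : eventually_constant (x1s s).
Proof. exists (length s), true. intros n Hn. apply x1s_ge; auto. Qed.

Lemma ec_neq x y : eventually_constant x -> ~ eventually_constant y -> x <> y.
Proof. intros H1 H2 ->. auto. Qed.

Lemma nec_find y i b : ~ eventually_constant y -> exists j, i <= j /\ y j = b.
Proof.
  intros H. apply NNPP. intros H'. apply H. exists i, (negb b). intros n Hn.
  destruct (y n) eqn:E, b; simpl; auto; exfalso; apply H'; exists n; auto.
Qed.

Lemma x0s_prefix_lt (x : cantor) n : ~ eventually_constant x -> lex_lt (x0s (prefix x n)) x.
Proof.
  intros Hx. destruct (lex_trich (x0s (prefix x n)) x) as [H|[[m [Hm [H1 H2]]]|H]]; auto.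
  - exfalso. destruct (Nat.lt_ge_cases m n).
    + rewrite (x0s_prefix x n m) in H1 by auto. congruence.
    + rewrite x0s_ge in H2 by (rewrite prefix_length; auto). congruence.
  - exfalso. apply (ec_neq _ _ (x0s_ec _) Hx H).
Qed.

Lemma x1s_prefix_gt (x : cantor) n : ~ eventually_constant x -> lex_lt x (x1s (prefix x n)).
Proof.
  intros Hx. destruct (lex_trich x (x1s (prefix x n))) as [H|[[m [Hm [H1 H2]]]|H]]; auto.
  - exfalso. destruct (Nat.lt_ge_cases m n).
    + rewrite <- (x1s_prefix x n m) in H1 by auto. congruence.
    + rewrite x1s_ge in H1 by (rewrite prefix_length; auto). congruence.
  - exfalso. apply (ec_neq _ _ (x1s_ec (prefix x n)) Hx). auto.
Qed.

Definition infinitely_often (L : cantor) (P : nat -> Prop) : Prop :=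
  forall k, exists n, k <= n /\ L n = true /\ P n.

Lemma infinitely_often_mono L (P Q : nat -> Prop) :
  (forall n, P n -> Q n) -> infinitely_often L P -> infinitely_often L Q.
Proof. intros HPQ H k. destruct (H k) as [n [? [? ?]]]. exists n; auto. Qed.

Definition flip (y : cantor) : cantor := fun k => negb (y k).

Lemma flip_involutive y : flip (flip y) = y.
Proof. apply functional_extensionality. intros k. apply Bool.negb_involutive. Qed.

Lemma lex_lt_flip x y : lex_lt x y -> lex_lt (flip y) (flip x).
Proof.
  intros [n [Hn [H1 H2]]]. exists n. unfold flip. split; [|rewrite H1, H2; auto].
  intros k Hk; rewrite Hn; auto.
Qed.

Lemma nec_flip y : ~ eventually_constant y -> ~ eventually_constant (flip y).
Proof.
  intros H [N [b Hb]]. apply H. exists N, (negb b). intros n Hn.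
  rewrite <- (flip_involutive y). unfold flip at 1. rewrite Hb; auto.
Qed.

Definition alternating (s : list bool) : cantor := fun k =>
  if Nat.ltb k (length s) then nth k s false else Nat.odd (k - length s).

Lemma alternating_nec s : ~ eventually_constant (alternating s).
Proof.
  intros [N [b H]].
  assert (H1 := H (N + length s) ltac:(lia)). assert (H2 := H (S (N + length s)) ltac:(lia)).
  unfold alternating in *.
  rewrite (proj2 (Nat.ltb_ge _ _)) in H1 by lia.
  rewrite (proj2 (Nat.ltb_ge _ _)) in H2 by lia.
  replace (S (N + length s) - length s) with (S N) in H2 by lia.
  replace (N + length s - length s) with N in H1 by lia.
  rewrite Nat.odd_succ, <- Nat.negb_odd in H2.
  destruct (Nat.odd N), b; simpl in *; congruence.
Qed.

Lemma x0s_lt_alternating s : lex_lt (x0s s) (alternating s).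
Proof.
  exists (S (length s)). unfold alternating. split; [|split].
  - intros k Hk. destruct (Nat.lt_ge_cases k (length s)).
    + rewrite x0s_lt, (proj2 (Nat.ltb_lt _ _)); auto.
    + rewrite x0s_ge, (proj2 (Nat.ltb_ge _ _)) by auto. replace (k - length s) with 0 by lia. auto.
  - apply x0s_ge; lia.
  - rewrite (proj2 (Nat.ltb_ge _ _)) by lia. replace (S (length s) - length s) with 1 by lia. auto.
Qed.

Lemma alternating_lt k s : k < length s -> alternating s k = nth k s false.
Proof. intros H; unfold alternating. rewrite (proj2 (Nat.ltb_lt _ _) H); auto. Qed.

Lemma borel_or {T} (op : (T -> Prop) -> Prop) B1 B2 :
  borel op B1 -> borel op B2 -> borel op (fun x => B1 x \/ B2 x).
Proof.
  intros H1 H2. apply borel_ext with (fun x => exists n, (match n with 0 => B1 | _ => B2 end) x).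
  - apply borel_cunion. intros [|n]; auto.
  - intros x; split; [intros [[|n] H]; auto|intros [H|H]; [exists 0|exists 1]; auto].
Qed.

Lemma borel_and {T} (op : (T -> Prop) -> Prop) B1 B2 :
  borel op B1 -> borel op B2 -> borel op (fun x => B1 x /\ B2 x).
Proof.
  intros H1 H2. apply borel_ext with (fun x => ~ (~ B1 x \/ ~ B2 x)).
  - apply borel_compl, borel_or; apply borel_compl; auto.
  - intros x; tauto.
Qed.

Lemma borel_forall_nat {T} (op : (T -> Prop) -> Prop) (Bs : nat -> T -> Prop) :
  (forall n, borel op (Bs n)) -> borel op (fun x => forall n, Bs n x).
Proof.
  intros H. apply borel_ext with (fun x => ~ exists n, ~ Bs n x).
  - apply borel_compl, borel_cunion. intros n; apply borel_compl; auto.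
  - intros x; split; [intros H1 n; apply NNPP; intros H2; apply H1; eauto|intros H1 [n Hn]; auto].
Qed.

Lemma borel_const (P : Prop) : borel_cantor (fun _ => P).
Proof.
  destruct (classic P) as [H|H].
  - apply borel_ext with (fun _ => True); [apply borel_open|tauto]. intros x _. exists 0; auto.
  - apply borel_ext with (fun _ => False); [apply borel_open|tauto]. intros x [].
Qed.

Lemma borel_imp_const (P : Prop) B : borel_cantor B -> borel_cantor (fun x => P -> B x).
Proof.
  intros H. apply borel_ext with (fun x => ~ P \/ B x).
  - apply borel_or; auto; apply borel_const.
  - intros x; split; [intros [H1|H1]; tauto|intros H1; destruct (classic P); tauto].
Qed.

Lemma borel_coord n b : borel_cantor (fun L : cantor => L n = b).
Proof.
  apply borel_open. intros x Hx. destruct (near_coord x n) as [m Hm].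
  exists m. intros y Ha. rewrite Hm; auto.
Qed.

Lemma borel_infinitely_often (P : nat -> cantor -> Prop) :
  (forall n, borel_cantor (P n)) -> borel_cantor (fun L => infinitely_often L (fun n => P n L)).
Proof.
  intros HP. apply borel_forall_nat; intros k. apply borel_cunion; intros n.
  apply borel_and; [apply borel_const|apply borel_and; [apply borel_coord|apply HP]].
Qed.

Definition measurable (g : cantor -> cantor) : Prop :=
  forall U, open_cantor U -> borel_cantor (fun L => U (g L)).

Lemma measurable_borel g B : measurable g -> borel_cantor B -> borel_cantor (fun L => B (g L)).
Proof.
  intros Hg HB. induction HB.
  - apply Hg; auto.
  - apply borel_compl; auto.
  - apply borel_cunion; auto.
  - apply borel_ext with (fun L => B (g L)); auto.
Qed.

Lemma measurable_const c : measurable (fun _ => c).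
Proof. intros U _. apply borel_const. Qed.

Lemma cont_preimage_open H U : cont_cc H -> open_cantor U -> open_cantor (fun z => U (H z)).
Proof.
  intros Hc HU z Hz. destruct (HU _ Hz) as [n Hn]. destruct (Hc z n) as [m Hm].
  exists m. intros y Ha. apply Hn, Hm; auto.
Qed.

Lemma borel_lex_gt x : borel_cantor (lex_lt x).
Proof. apply borel_open. intros y H. apply lex_lt_near_r; auto. Qed.

Lemma borel_lex_lt x : borel_cantor (fun y => lex_lt y x).
Proof. apply borel_open. intros y H. apply lex_lt_near_l; auto. Qed.

Section Sequence.
Variable hinv : nat -> list bool.

(* f_n is the indicator of a ray [threshold n, oo) or (threshold n, oo). *)
Definition threshold (n : nat) : cantor :=
  let s := hinv (n / 4) in
  match n mod 4 with 0 => x0s s | 1 => x1s s | 2 => x0s s | _ => x1s s end.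

Lemma threshold_ec n : eventually_constant (threshold n).
Proof. unfold threshold. destruct (n mod 4) as [|[|[|]]]; apply x0s_ec || apply x1s_ec. Qed.

Lemma chi_true (P : Prop) : P -> chi P = 1%R.
Proof. intros H; unfold chi; destruct excluded_middle_informative; tauto. Qed.
Lemma chi_false (P : Prop) : ~ P -> chi P = 0%R.
Proof. intros H; unfold chi; destruct excluded_middle_informative; tauto. Qed.
Lemma chi_eq1 (P : Prop) : chi P = 1%R <-> P.
Proof. unfold chi. destruct excluded_middle_informative; split; intros; auto; try tauto. lra. Qed.

Lemma fseq_01 n y : fseq hinv n y = 0%R \/ fseq hinv n y = 1%R.
Proof.
  unfold fseq, fplus, fminus, chi.
  destruct (n mod 4) as [|[|[|]]]; destruct excluded_middle_informative; auto.
Qed.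

Lemma fseq_above n y : lex_lt (threshold n) y -> fseq hinv n y = 1%R.
Proof.
  unfold fseq, fplus, fminus, threshold. intros H.
  destruct (n mod 4) as [|[|[|]]]; apply chi_true; auto; left; auto.
Qed.

Lemma fseq_below n y : lex_lt y (threshold n) -> fseq hinv n y = 0%R.
Proof.
  unfold fseq, fplus, fminus, threshold. intros H.
  destruct (n mod 4) as [|[|[|]]]; apply chi_false;
    try (rewrite lex_le_iff; tauto); apply lex_lt_asym; auto.
Qed.

Lemma fseq_cases n y : ~ eventually_constant y ->
  (fseq hinv n y = 1%R /\ lex_lt (threshold n) y) \/
  (fseq hinv n y = 0%R /\ lex_lt y (threshold n)).
Proof.
  intros Hy. destruct (lex_trich (threshold n) y) as [H|[H|H]].
  - left; auto using fseq_above.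
  - right; auto using fseq_below.
  - exfalso; apply (ec_neq _ _ (threshold_ec n) Hy H).
Qed.

Lemma fseq_one_iff n y : ~ eventually_constant y ->
  fseq hinv n y = 1%R <-> lex_lt (threshold n) y.
Proof.
  intros Hy. split; [|apply fseq_above].
  destruct (fseq_cases n y Hy) as [[_ H]|[H _]]; auto. lra.
Qed.

Lemma fseq_zero_iff n y : ~ eventually_constant y ->
  fseq hinv n y = 0%R <-> lex_lt y (threshold n).
Proof.
  intros Hy. split; [|apply fseq_below].
  destruct (fseq_cases n y Hy) as [[H _]|[_ H]]; auto. lra.
Qed.

Lemma fseq_near n y : ~ eventually_constant y ->
  near y (fun z => fseq hinv n z = fseq hinv n y).
Proof.
  intros Hy. destruct (fseq_cases n y Hy) as [[H1 H2]|[H1 H2]].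
  - destruct (lex_lt_near_r _ _ H2) as [m Hm]. exists m. intros z Ha.
    rewrite H1; apply fseq_above; auto.
  - destruct (lex_lt_near_l _ _ H2) as [m Hm]. exists m. intros z Ha.
    rewrite H1; apply fseq_below; auto.
Qed.

Definition oscillates (L : cantor) (y : cantor) : Prop :=
  infinitely_often L (fun n => fseq hinv n y = 1%R) /\
  infinitely_often L (fun n => fseq hinv n y = 0%R).

Lemma converges_iff_not_oscillates L y :
  (exists l : R, forall eps, (eps > 0)%R ->
     exists N, forall n, L n = true -> N <= n -> (Rabs (fseq hinv n y - l) < eps)%R)
  <-> ~ oscillates L y.
Proof.
  split.
  - intros [l Hl] [H1 H0]. destruct (Hl (1/2)%R) as [N HN]; [lra|].
    destruct (H1 N) as [n [Hn [Ln Vn]]], (H0 N) as [n' [Hn' [Ln' Vn']]].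
    pose proof (HN n Ln Hn) as A1. pose proof (HN n' Ln' Hn') as A2.
    rewrite Vn in A1. rewrite Vn' in A2.
    apply Rabs_def2 in A1. apply Rabs_def2 in A2. lra.
  - intros H. apply not_and_or in H.
    destruct H as [H|H]; apply not_all_ex_not in H; destruct H as [k Hk].
    + exists 0%R. intros eps He. exists k. intros n Ln Hn.
      destruct (fseq_01 n y) as [V|V]; [|exfalso; apply Hk; exists n; auto].
      rewrite V, Rminus_0_r, Rabs_R0; auto.
    + exists 1%R. intros eps He. exists k. intros n Ln Hn.
      destruct (fseq_01 n y) as [V|V]; [exfalso; apply Hk; exists n; auto|].
      rewrite V, Rminus_diag, Rabs_R0; auto.
Qed.

Lemma LA_iff (A : cantor -> Prop) L :
  LA hinv A L <-> infinite_set L /\ forall y, A y -> ~ oscillates L y.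
Proof.
  unfold LA. split; intros [Hi H]; split; auto; intros y Ay;
    apply converges_iff_not_oscillates; auto.
Qed.

Lemma oscillates_iff_between L y : ~ eventually_constant y ->
  oscillates L y <->
  infinitely_often L (fun n => lex_lt (threshold n) y) /\
  infinitely_often L (fun n => lex_lt y (threshold n)).
Proof.
  intros Hy. unfold oscillates.
  split; intros [H1 H0]; split.
  - revert H1. apply infinitely_often_mono. intros n. apply fseq_one_iff; auto.
  - revert H0. apply infinitely_often_mono. intros n. apply fseq_zero_iff; auto.
  - revert H1. apply infinitely_often_mono. intros n. apply fseq_one_iff; auto.
  - revert H0. apply infinitely_often_mono. intros n. apply fseq_zero_iff; auto.
Qed.

Lemma borel_fseq_one n : borel_cantor (fun y => fseq hinv n y = 1%R).
Proof.
  unfold fseq, fplus, fminus.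
  destruct (n mod 4) as [|[|[|]]];
    (eapply borel_ext; [|intros y; symmetry; apply chi_eq1]);
    try apply borel_lex_gt;
    (eapply borel_ext; [apply borel_compl, borel_lex_lt|intros y; symmetry; apply lex_le_iff]).
Qed.

Lemma borel_fseq_zero n : borel_cantor (fun y => fseq hinv n y = 0%R).
Proof.
  apply borel_ext with (fun y => ~ fseq hinv n y = 1%R).
  - apply borel_compl, borel_fseq_one.
  - intros y. destruct (fseq_01 n y) as [H|H]; rewrite H; split; intros; lra.
Qed.

Lemma borel_oscillates g : measurable g -> borel_cantor (fun L => oscillates L (g L)).
Proof.
  intros Hg. apply borel_and; apply borel_infinitely_often; intros n.
  - apply (measurable_borel g (fun y => fseq hinv n y = 1%R)); auto using borel_fseq_one.
  - apply (measurable_borel g (fun y => fseq hinv n y = 0%R)); auto using borel_fseq_zero.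
Qed.

End Sequence.

Section Enumeration.
Variable h : list bool -> nat.
Variable hinv : nat -> list bool.
Hypothesis h_hinv : forall n, h (hinv n) = n.
Hypothesis hinv_h : forall s, hinv (h s) = s.
Hypothesis h_mono : forall s t, length s < length t -> h s < h t.

(* Since h increases with the length, the code of a prefix of length m is >= m. *)
Lemma code_prefix_ge (x : cantor) m : m <= h (prefix x m).
Proof.
  induction m; [lia|].
  assert (h (prefix x m) < h (prefix x (S m))); [|lia].
  apply h_mono. rewrite !prefix_length; lia.
Qed.

Lemma threshold_code0 s : threshold hinv (4 * h s) = x0s s.
Proof.
  unfold threshold. destruct (div_mod_affine 4 (h s) 0) as [E1 E2]; [lia|].
  rewrite Nat.add_0_r in E1, E2. rewrite E1, E2, hinv_h. auto.
Qed.

Lemma threshold_code1 s : threshold hinv (4 * h s + 1) = x1s s.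
Proof.
  unfold threshold. destruct (div_mod_affine 4 (h s) 1) as [E1 E2]; [lia|].
  rewrite E1, E2, hinv_h. auto.
Qed.

Lemma fseq_code0 y k : ~ eventually_constant y -> fseq hinv (4 * h (prefix y k)) y = 1%R.
Proof. intros Hy. apply fseq_above. rewrite threshold_code0. apply x0s_prefix_lt; auto. Qed.

Lemma fseq_code1 y k : ~ eventually_constant y -> fseq hinv (4 * h (prefix y k) + 1) y = 0%R.
Proof. intros Hy. apply fseq_below. rewrite threshold_code1. apply x1s_prefix_gt; auto. Qed.

Lemma code_length_bound (x : cantor) m n :
  4 * h (prefix x m) + 4 <= n -> m <= length (hinv (n / 4)).
Proof.
  intros Hn. destruct (Nat.lt_ge_cases (length (hinv (n / 4))) m) as [Hl|]; auto.
  exfalso. assert (Hh : h (hinv (n / 4)) < h (prefix x m)).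
  { apply h_mono. rewrite prefix_length. lia. }
  rewrite h_hinv in Hh.
  assert (Hd : (4 * (h (prefix x m) + 1)) / 4 <= n / 4) by (apply Nat.Div0.div_le_mono; lia).
  rewrite Nat.mul_comm, Nat.div_mul in Hd by lia. lia.
Qed.

(* The Wadge reduction: H x = {4h(s), 4h(s)+1 | s an initial segment of x}. *)
Definition prefixb (s : list bool) (x : cantor) : bool :=
  if list_eq_dec Bool.bool_dec s (prefix x (length s)) then true else false.

Definition reduction (x : cantor) : cantor :=
  fun n => andb (Nat.ltb (n mod 4) 2) (prefixb (hinv (n / 4)) x).

Lemma reduction_code x m :
  reduction x (4 * h (prefix x m)) = true /\ reduction x (4 * h (prefix x m) + 1) = true.
Proof.
  unfold reduction, prefixb.
  destruct (div_mod_affine 4 (h (prefix x m)) 0) as [E1 E2]; [lia|].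
  destruct (div_mod_affine 4 (h (prefix x m)) 1) as [E3 E4]; [lia|].
  rewrite Nat.add_0_r in E1, E2. rewrite E1, E2, E3, E4, hinv_h, prefix_length.
  destruct list_eq_dec; auto; congruence.
Qed.

Lemma reduction_infinite x : infinite_set (reduction x).
Proof.
  intros m. exists (4 * h (prefix x m)). pose proof (code_prefix_ge x m).
  split; [lia|apply reduction_code].
Qed.

Lemma reduction_cont : cont_cc reduction.
Proof.
  intros x n. apply near_forall_lt. intros k _.
  exists (length (hinv (k / 4))). intros y Ha.
  unfold reduction, prefixb. rewrite (prefix_agree x y _ Ha). auto.
Qed.

Lemma reduction_threshold x n m :
  reduction x n = true -> 4 * h (prefix x m) + 4 <= n -> agree m x (threshold hinv n).
Proof.
  intros Hn Hm. apply (agree_mono (length (hinv (n / 4)))); [apply (code_length_bound x); auto|].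
  revert Hn. unfold reduction, prefixb, threshold.
  destruct (Nat.ltb (n mod 4) 2) eqn:E; [|discriminate].
  destruct list_eq_dec as [e|]; [|discriminate]. intros _.
  apply Nat.ltb_lt in E.
  destruct (n mod 4) as [|[|[|]]]; try lia; rewrite e at 2; [apply x0s_prefix|apply x1s_prefix].
Qed.

Lemma reduction_oscillates_self x : ~ eventually_constant x -> oscillates hinv (reduction x) x.
Proof.
  intros Hx. split; intros k; pose proof (code_prefix_ge x k); pose proof (reduction_code x k).
  - exists (4 * h (prefix x k)). repeat split; [lia|tauto|apply fseq_code0; auto].
  - exists (4 * h (prefix x k) + 1). repeat split; [lia|tauto|apply fseq_code1; auto].
Qed.

(* x is the only point at which (f_n)_{n in H x} oscillates: beyond the first
   disagreement j of y with x, all thresholds of H x lie on x's side of y. *)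
Lemma reduction_oscillates_only_at x y : oscillates hinv (reduction x) y -> y = x.
Proof.
  intros [H1 H0]. apply NNPP. intros Hne.
  destruct (first_diff x y) as [j [Hj Ha]]; [auto|].
  set (N := 4 * h (prefix x (S j)) + 4).
  destruct (x j) eqn:Ex, (y j) eqn:Ey; try congruence.
  - destruct (H1 N) as [n [Hn [Ln Vn]]].
    assert (Ht := reduction_threshold x n (S j) Ln Hn).
    rewrite fseq_below in Vn; [lra|]. exists j. repeat split.
    + intros k Hk. rewrite <- Ha by auto. apply Ht. lia.
    + auto.
    + rewrite <- Ht; auto.
  - destruct (H0 N) as [n [Hn [Ln Vn]]].
    assert (Ht := reduction_threshold x n (S j) Ln Hn).
    rewrite fseq_above in Vn; [lra|]. exists j. repeat split.
    + intros k Hk. rewrite <- Ha by auto. symmetry. apply Ht. lia.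
    + rewrite <- Ht; auto.
    + auto.
Qed.

Lemma reduction_LA (A : cantor -> Prop) x :
  (forall y, A y -> ~ eventually_constant y) -> LA hinv A (reduction x) <-> ~ A x.
Proof.
  intros HAnec. rewrite LA_iff. split.
  - intros [_ H] Ax. apply (H x Ax), reduction_oscillates_self; auto.
  - intros nAx. split; [apply reduction_infinite|].
    intros y Ay Hy. apply reduction_oscillates_only_at in Hy. subst. auto.
Qed.


Definition target_value (i : nat) : R := if Nat.even i then 1%R else 0%R.

Definition canonical_witness (y : cantor) (i : nat) : nat :=
  4 * h (prefix y i) + (if Nat.even i then 0 else 1).

Lemma canonical_witness_ge y i : i <= canonical_witness y i.
Proof. unfold canonical_witness. pose proof (code_prefix_ge y i). lia. Qed.

Lemma canonical_witness_val y i : ~ eventually_constant y ->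
  fseq hinv (canonical_witness y i) y = target_value i.
Proof.
  intros Hy. unfold canonical_witness, target_value. destruct (Nat.even i).
  - rewrite Nat.add_0_r. apply fseq_code0; auto.
  - apply fseq_code1; auto.
Qed.

Lemma existsb_ext_in {T} (f g : T -> bool) l :
  (forall i, In i l -> f i = g i) -> existsb f l = existsb g l.
Proof. induction l; simpl; intros H; auto. rewrite H, IHl; auto. Qed.

Definition interleave3 (a c d : baire) : baire := fun j =>
  match j mod 3 with 0 => a (j / 3) | 1 => c (j / 3) | _ => d (j / 3) end.

Lemma interleave3_spec a c d i :
  interleave3 a c d (3 * i) = a i /\ interleave3 a c d (3 * i + 1) = c i /\
  interleave3 a c d (3 * i + 2) = d i.
Proof.
  unfold interleave3.
  destruct (div_mod_affine 3 i 0) as [E1 E2]; [lia|].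
  destruct (div_mod_affine 3 i 1) as [E3 E4]; [lia|].
  destruct (div_mod_affine 3 i 2) as [E5 E6]; [lia|].
  rewrite Nat.add_0_r in E1, E2. rewrite E1, E2, E3, E4, E5, E6. auto.
Qed.

Section Coanalytic.
Variable A : cantor -> Prop.
Hypothesis HAnec : forall y, A y -> ~ eventually_constant y.
Variable fA : baire -> cantor.
Hypothesis fA_cont : cont_bc fA.
Hypothesis fA_im : forall x, A x <-> exists a, fA a = x.

(* A code b in N^N splits into three streams: a parameter of a point of A, the
   characteristic function of a set, and a sequence of candidate witnesses. *)
Definition code_point (b : baire) : cantor := fA (fun i => b (3 * i)).
Definition code_set (b : baire) : cantor := fun i => Nat.eqb (b (3 * i + 1)) 1.
Definition code_witness (b : baire) (i : nat) : nat := b (3 * i + 2).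

Definition witness (b : baire) (i : nat) : nat :=
  if excluded_middle_informative
       (i <= code_witness b i /\ fseq hinv (code_witness b i) (code_point b) = target_value i)
  then code_witness b i else canonical_witness (code_point b) i.

(* The coded set together with all witnesses: a set along which f_n oscillates
   at a point of A. *)
Definition coded_set (b : baire) : cantor := fun k =>
  orb (code_set b k) (existsb (fun i => Nat.eqb (witness b i) k) (seq 0 (S k))).

Lemma code_point_A b : A (code_point b).
Proof. apply fA_im. eexists; reflexivity. Qed.

Lemma witness_ge b i : i <= witness b i.
Proof. unfold witness. destruct excluded_middle_informative as [[H _]|]; auto using canonical_witness_ge. Qed.

Lemma witness_val b i : fseq hinv (witness b i) (code_point b) = target_value i.
Proof.
  unfold witness. destruct excluded_middle_informative as [[_ H]|]; auto.
  apply canonical_witness_val, HAnec, code_point_A.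
Qed.

Lemma coded_set_witness b i : coded_set b (witness b i) = true.
Proof.
  unfold coded_set. apply Bool.orb_true_iff. right. apply existsb_exists. exists i. split.
  - apply in_seq. pose proof (witness_ge b i). lia.
  - apply Nat.eqb_refl.
Qed.

Lemma coded_set_infinite b : infinite_set (coded_set b).
Proof. intros m. exists (witness b m). split; [apply witness_ge|apply coded_set_witness]. Qed.

Lemma coded_set_oscillates b : oscillates hinv (coded_set b) (code_point b).
Proof.
  split; intros k.
  - exists (witness b (2 * k)). pose proof (witness_ge b (2 * k)).
    repeat split; [lia|apply coded_set_witness|].
    rewrite witness_val. unfold target_value. rewrite Nat.even_mul. auto.
  - exists (witness b (2 * k + 1)). pose proof (witness_ge b (2 * k + 1)).
    repeat split; [lia|apply coded_set_witness|].
    rewrite witness_val. unfold target_value. rewrite Nat.even_add, Nat.even_mul. auto.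
Qed.

(* Each witness depends continuously on the code: f_n is locally constant at
   the coded point, which depends continuously on b. *)
Lemma witness_near b i : near b (fun b' => witness b' i = witness b i).
Proof.
  assert (Hy : ~ eventually_constant (code_point b)) by apply HAnec, code_point_A.
  destruct (fseq_near hinv (code_witness b i) (code_point b) Hy) as [M HM].
  destruct (fA_cont (fun j => b (3 * j)) (max M i)) as [m0 Hm0].
  exists (max (3 * m0) (3 * i + 3)). intros b' Ha.
  assert (Hd : code_witness b' i = code_witness b i).
  { unfold code_witness. symmetry; apply Ha. lia. }
  assert (Hya : agree (max M i) (code_point b) (code_point b')).
  { apply Hm0. intros k Hk. apply Ha. lia. }
  assert (Hv : fseq hinv (code_witness b i) (code_point b') =
               fseq hinv (code_witness b i) (code_point b)).
  { apply HM. apply (agree_mono (max M i)); auto; lia. }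
  assert (Hp : prefix (code_point b') i = prefix (code_point b) i).
  { symmetry; apply prefix_agree. apply (agree_mono (max M i)); auto; lia. }
  unfold witness, canonical_witness. rewrite Hd, Hv, Hp. auto.
Qed.

Lemma coded_set_cont : cont_bc coded_set.
Proof.
  intros b n. apply near_forall_lt. intros k _.
  destruct (near_forall_lt b (fun i b' => witness b' i = witness b i) (S k)) as [m1 Hm1].
  { intros i _. apply witness_near. }
  exists (max m1 (3 * k + 2)). intros b' Ha. unfold coded_set, code_set. f_equal.
  - rewrite (Ha (3 * k + 1)) by lia. auto.
  - apply existsb_ext_in. intros i Hi. apply in_seq in Hi.
    rewrite (Hm1 b'); [auto|apply (agree_mono (max m1 (3 * k + 2))); auto; lia|lia].
Qed.

(* Every infinite L outside L_A is coded: take a point y of A at which f_n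
   oscillates along L, a parameter of y, L itself, and witnesses from L. *)
Lemma coded_set_onto L : infinite_set L -> ~ LA hinv A L -> exists b, coded_set b = L.
Proof.
  intros Hi HL. rewrite LA_iff in HL.
  assert (exists y, A y /\ oscillates hinv L y) as [y [Ay [Hb1 Hb0]]].
  { apply NNPP; intros Hn. apply HL. split; auto. intros y Ay Hb. apply Hn; eauto. }
  destruct (proj1 (fA_im y) Ay) as [a Ha].
  assert (Hd : forall i, exists n, i <= n /\ L n = true /\ fseq hinv n y = target_value i).
  { intros i. unfold target_value. destruct (Nat.even i); [apply Hb1|apply Hb0]. }
  destruct (choice _ Hd) as [d Hdd].
  set (b := interleave3 a (fun i => if L i then 1 else 0) d).
  assert (Ey : code_point b = y).
  { rewrite <- Ha. unfold code_point. f_equal. apply functional_extensionality; intros i.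
    apply interleave3_spec. }
  assert (Ee : forall i, witness b i = d i).
  { intros i. unfold witness, code_witness. rewrite Ey. unfold b.
    rewrite (proj2 (proj2 (interleave3_spec _ _ _ i))).
    destruct excluded_middle_informative as [|Hn]; auto.
    exfalso; apply Hn; split; apply Hdd. }
  exists b. apply functional_extensionality; intros k. unfold coded_set.
  assert (Ec : code_set b k = L k).
  { unfold code_set, b. rewrite (proj1 (proj2 (interleave3_spec _ _ _ k))). destruct (L k); auto. }
  rewrite Ec. destruct (L k) eqn:Lk; auto. rewrite Bool.orb_false_l.
  destruct existsb eqn:E; auto.
  apply existsb_exists in E. destruct E as [i [_ Hik]]. apply Nat.eqb_eq in Hik.
  rewrite Ee in Hik. subst k. rewrite (proj1 (proj2 (Hdd i))) in Lk. discriminate.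
Qed.

Lemma coded_set_not_LA b : ~ LA hinv A (coded_set b).
Proof.
  rewrite LA_iff. intros [_ H]. apply (H (code_point b) (code_point_A b)), coded_set_oscillates.
Qed.

End Coanalytic.

(* L_A is coanalytic in [N]: its complement there is empty or the continuous
   image [coded_set] of N^N. *)
Lemma LA_coanalytic A : analytic_cantor A -> (forall y, A y -> ~ eventually_constant y) ->
  coanalytic_in infinite_set (LA hinv A).
Proof.
  intros HA HAnec. split; [intros x [H _]; auto|].
  destruct HA as [Hemp|[fA [Hc [_ Him]]]].
  - left. intros L [HL Hn]. apply Hn. rewrite LA_iff. split; auto.
    intros y Ay. exfalso; eapply Hemp; eauto.
  - right. exists (coded_set fA).
    split; [apply (coded_set_cont A); auto|split; [apply coded_set_infinite|]].
    intros L. split.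
    + intros [Hi HL]. apply (coded_set_onto A); auto.
    + intros [b <-]. split; [apply coded_set_infinite|apply (coded_set_not_LA A); auto].
Qed.


(* Measurability can be checked coordinatewise: an open set is the union of
   the cylinders it contains, and cylinders are enumerated through hinv. *)
Lemma cylinder_borel (g : cantor -> cantor) (s : list bool) :
  (forall i b, borel_cantor (fun L => g L i = b)) ->
  borel_cantor (fun L => prefix (g L) (length s) = s).
Proof.
  intros Hg. apply borel_ext with (fun L => forall i, i < length s -> g L i = nth i s false).
  - apply borel_forall_nat; intros i. apply borel_imp_const; auto.
  - intros L. split.
    + intros H. apply nth_ext with false false; [apply prefix_length|].
      intros i Hi. rewrite prefix_length in Hi. rewrite prefix_nth; auto.
    + intros H i Hi. rewrite <- H, prefix_nth; auto.
Qed.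

Lemma measurable_of_coords (g : cantor -> cantor) :
  (forall i b, borel_cantor (fun L => g L i = b)) -> measurable g.
Proof.
  intros Hg U HU.
  apply borel_ext with (fun L => exists m, (forall y, prefix y (length (hinv m)) = hinv m -> U y)
                                       /\ prefix (g L) (length (hinv m)) = hinv m).
  - apply borel_cunion. intros m. apply borel_and; [apply borel_const|apply cylinder_borel; auto].
  - intros L. split.
    + intros [m [H1 H2]]. auto.
    + intros H. destruct (HU _ H) as [n Hn]. exists (h (prefix (g L) n)).
      rewrite hinv_h, prefix_length. split; auto.
      intros y Hy. apply Hn, agree_of_prefix. auto.
Qed.

(* A Borel selector of the lexicographically least point above infinitely many
   p_n, n in L (among non-eventually-constant points, when such a least one exists). *)
Section Selector.
Variable p : nat -> cantor.

Definition above (L y : cantor) : Prop := infinitely_often L (fun n => lex_lt (p n) y).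

Lemma above_up L y z : above L y -> lex_lt y z -> above L z.
Proof. intros H Hyz. revert H. apply infinitely_often_mono. intros n Hn. eapply lex_lt_trans; eauto. Qed.

Definition cone_above (L : cantor) (u : list bool) : Prop :=
  exists w, above L (x0s (u ++ w ++ [true])).

Definition next_bit (L : cantor) (u : list bool) : bool :=
  if excluded_middle_informative (cone_above L (u ++ [false])) then false else true.

Fixpoint selector_prefix (L : cantor) (i : nat) : list bool :=
  match i with 0 => [] | S i => selector_prefix L i ++ [next_bit L (selector_prefix L i)] end.

Definition least_above (L : cantor) : cantor := fun i => next_bit L (selector_prefix L i).

(* If y_i = 0 and y is above L, the 0-branch at y|i meets [above L]: y lies
   below the point (y|j) 1 0^oo for any later j with y_j = 0. *)
Lemma cone_above_at_zero L y i : ~ eventually_constant y -> above L y -> y i = false ->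
  cone_above L (prefix y i ++ [false]).
Proof.
  intros Hy HU Ey. destruct (nec_find y (S i) false Hy) as [j [Hj Eyj]].
  exists (skipn (S i) (prefix y j)).
  replace ((prefix y i ++ [false]) ++ skipn (S i) (prefix y j) ++ [true]) with (prefix y j ++ [true]).
  - apply (above_up _ y); auto. exists j. repeat split.
    + intros k Hk. rewrite x0s_lt, nth_prefix_app; auto. rewrite length_app, prefix_length; simpl; lia.
    + auto.
    + rewrite x0s_lt, nth_prefix_app_at; auto. rewrite length_app, prefix_length; simpl; lia.
  - rewrite app_assoc. f_equal.
    replace (prefix y i ++ [false]) with (prefix y (S i)) by (simpl; rewrite Ey; auto).
    rewrite <- (prefix_firstn y (S i) j) by lia. symmetry. apply firstn_skipn.
Qed.

Lemma cone_above_at_one L y i : y i = true -> cone_above L (prefix y i ++ [false]) ->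
  exists z, ~ eventually_constant z /\ lex_lt z y /\ above L z.
Proof.
  intros Ey [w Hw]. rewrite <- app_assoc in Hw. simpl in Hw.
  set (s := prefix y i ++ false :: w ++ [true]) in Hw.
  assert (Hlen : i < length s) by (unfold s; rewrite length_app, prefix_length; simpl; lia).
  exists (alternating s). split; [apply alternating_nec|split].
  - exists i. repeat split.
    + intros k Hk. rewrite alternating_lt by lia. unfold s. rewrite nth_prefix_app; auto.
    + rewrite alternating_lt by auto. unfold s. apply nth_prefix_app_at.
    + auto.
  - apply (above_up _ (x0s s)); auto. apply x0s_lt_alternating.
Qed.

Lemma next_bit_correct L y i : ~ eventually_constant y -> above L y ->
  (forall z, ~ eventually_constant z -> lex_lt z y -> ~ above L z) ->
  next_bit L (prefix y i) = y i.
Proof.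
  intros Hy HU Hmin. unfold next_bit. destruct excluded_middle_informative as [Hc|Hc].
  - destruct (y i) eqn:Ey; auto. exfalso.
    destruct (cone_above_at_one L y i Ey Hc) as [z [Hz [Hzy HUz]]]. apply (Hmin z); auto.
  - destruct (y i) eqn:Ey; auto. exfalso. apply Hc, cone_above_at_zero; auto.
Qed.

Lemma least_above_spec L y : ~ eventually_constant y -> above L y ->
  (forall z, ~ eventually_constant z -> lex_lt z y -> ~ above L z) -> least_above L = y.
Proof.
  intros Hy HU Hmin.
  assert (Hp : forall i, selector_prefix L i = prefix y i).
  { induction i; simpl; auto. rewrite IHi, next_bit_correct; auto. }
  apply functional_extensionality. intros i. unfold least_above. rewrite Hp.
  apply next_bit_correct; auto.
Qed.

Lemma cone_above_borel u : borel_cantor (fun L => cone_above L u).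
Proof.
  apply borel_ext with (fun L => exists m, above L (x0s (u ++ hinv m ++ [true]))).
  - apply borel_cunion; intros m. apply (borel_infinitely_often (fun n _ => lex_lt (p n) _)).
    intros n. apply borel_const.
  - intros L. split; intros [w Hw]; [exists (hinv w); auto|exists (h w); rewrite hinv_h; auto].
Qed.

Lemma next_bit_borel u b : borel_cantor (fun L => next_bit L u = b).
Proof.
  apply borel_ext with (fun L => (b = false /\ cone_above L (u ++ [false])) \/
                                 (b = true /\ ~ cone_above L (u ++ [false]))).
  - apply borel_or; apply borel_and; try apply borel_const;
      [|apply borel_compl]; apply cone_above_borel.
  - intros L. unfold next_bit. destruct excluded_middle_informative; destruct b; intuition congruence.
Qed.

Lemma selector_prefix_borel i : forall u, borel_cantor (fun L => selector_prefix L i = u).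
Proof.
  induction i; intros u.
  - apply borel_ext with (fun _ => @nil bool = u); [apply borel_const|intros; simpl; tauto].
  - apply borel_ext with (fun L => exists m, selector_prefix L i = hinv m /\
       ((next_bit L (hinv m) = false /\ u = hinv m ++ [false]) \/
        (next_bit L (hinv m) = true /\ u = hinv m ++ [true]))).
    + apply borel_cunion; intros m. apply borel_and; [apply IHi|].
      apply borel_or; apply borel_and; apply next_bit_borel || apply borel_const.
    + intros L. simpl. split.
      * intros [m [E1 [[E2 E3]|[E2 E3]]]]; rewrite E1, E2, E3; auto.
      * intros E. exists (h (selector_prefix L i)). rewrite hinv_h. split; auto.
        destruct (next_bit L (selector_prefix L i)); auto.
Qed.

Lemma least_above_measurable : measurable least_above.
Proof.
  apply measurable_of_coords. intros i b.
  apply borel_ext with (fun L => exists m, selector_prefix L i = hinv m /\ next_bit L (hinv m) = b).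
  - apply borel_cunion; intros m. apply borel_and; [apply selector_prefix_borel|apply next_bit_borel].
  - intros L. unfold least_above. split.
    + intros [m [E1 E2]]. rewrite E1; auto.
    + intros E. exists (h (selector_prefix L i)). rewrite hinv_h. auto.
Qed.

End Selector.

Definition below (p : nat -> cantor) (L y : cantor) : Prop :=
  infinitely_often L (fun n => lex_lt y (p n)).

Lemma below_down p L y z : below p L y -> lex_lt z y -> below p L z.
Proof. intros H Hzy. revert H. apply infinitely_often_mono. intros n Hn. eapply lex_lt_trans; eauto. Qed.

Definition greatest_below (p : nat -> cantor) (L : cantor) : cantor :=
  flip (least_above (fun n => flip (p n)) L).

Lemma below_above_flip p L y : below p L y -> above (fun n => flip (p n)) L (flip y).
Proof. apply infinitely_often_mono. intros n. apply lex_lt_flip. Qed.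

Lemma above_flip_below p L z : above (fun n => flip (p n)) L z -> below p L (flip z).
Proof.
  apply infinitely_often_mono. intros n Hn. apply lex_lt_flip in Hn.
  rewrite flip_involutive in Hn. auto.
Qed.

Lemma greatest_below_spec p L y : ~ eventually_constant y -> below p L y ->
  (forall z, ~ eventually_constant z -> lex_lt y z -> ~ below p L z) -> greatest_below p L = y.
Proof.
  intros Hy HV Hmax. unfold greatest_below.
  rewrite (least_above_spec _ L (flip y)).
  - apply flip_involutive.
  - apply nec_flip; auto.
  - apply below_above_flip; auto.
  - intros z Hz Hzy HUz. apply (Hmax (flip z)); [apply nec_flip; auto| |apply above_flip_below; auto].
    apply lex_lt_flip in Hzy. rewrite flip_involutive in Hzy. auto.
Qed.

Lemma greatest_below_measurable p : measurable (greatest_below p).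
Proof.
  apply measurable_of_coords. intros i b.
  apply borel_ext with (fun L => least_above (fun n => flip (p n)) L i = negb b).
  - apply (measurable_borel _ (fun y => y i = negb b)); [apply least_above_measurable|apply borel_coord].
  - intros L. unfold greatest_below, flip. destruct (least_above _ L i), b; simpl; split; congruence.
Qed.

(* At non-eventually-constant points, the set where (f_n)_{n in L} oscillates
   is convex: it is the intersection of an up-closed and a down-closed set. *)
Lemma oscillates_between L u z v :
  ~ eventually_constant u -> ~ eventually_constant z -> ~ eventually_constant v ->
  lex_lt u z -> lex_lt z v -> oscillates hinv L u -> oscillates hinv L v -> oscillates hinv L z.
Proof.
  intros Hu Hz Hv Huz Hzv HoU HoV.
  apply oscillates_iff_between in HoU, HoV; auto. apply oscillates_iff_between; auto.
  split; [apply (above_up (threshold hinv) L u)|apply (below_down (threshold hinv) L v)]; tauto.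
Qed.

Section BorelCase.
Variable A : cantor -> Prop.
Hypothesis HAnec : forall y, A y -> ~ eventually_constant y.

(* A chosen point of A in the cone of hinv m, when there is one; these points
   form a countable dense subset of A. *)
Definition cone_meets_A (m : nat) : Prop :=
  exists a, A a /\ prefix a (length (hinv m)) = hinv m.

Definition cone_point (m : nat) : cantor :=
  epsilon (inhabits ((fun _ => false) : cantor))
    (fun a => A a /\ prefix a (length (hinv m)) = hinv m).

Lemma cone_point_spec m :
  cone_meets_A m -> A (cone_point m) /\ prefix (cone_point m) (length (hinv m)) = hinv m.
Proof.
  intros H. exact (epsilon_spec (inhabits ((fun _ => false) : cantor))
                     (fun a => A a /\ prefix a (length (hinv m)) = hinv m) H).
Qed.

Definition oscillation_candidate (L : cantor) : Prop :=
  (exists m, cone_meets_A m /\ oscillates hinv L (cone_point m)) \/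
  (A (least_above (threshold hinv) L) /\ oscillates hinv L (least_above (threshold hinv) L)) \/
  (A (greatest_below (threshold hinv) L) /\ oscillates hinv L (greatest_below (threshold hinv) L)).

Lemma oscillation_candidate_borel : borel_cantor A -> borel_cantor oscillation_candidate.
Proof.
  intros HAb. apply borel_or; [|apply borel_or].
  - apply borel_cunion; intros m. apply borel_and; [apply borel_const|].
    apply (borel_oscillates hinv (fun _ => cone_point m)), measurable_const.
  - apply borel_and; [apply (measurable_borel _ A); auto|apply borel_oscillates];
      apply least_above_measurable.
  - apply borel_and; [apply (measurable_borel _ A); auto|apply borel_oscillates];
      apply greatest_below_measurable.
Qed.

Lemma oscillation_candidate_sound L :
  oscillation_candidate L -> exists y, A y /\ oscillates hinv L y.
Proof.
  intros [[m [Hm Ho]]|[[Ha Ho]|[Ha Ho]]]; eauto.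
  exists (cone_point m). split; auto. apply cone_point_spec; auto.
Qed.

Lemma candidate_between L y u v : A y ->
  ~ eventually_constant u -> ~ eventually_constant v -> lex_lt u y -> lex_lt y v ->
  oscillates hinv L u -> oscillates hinv L v ->
  exists m, cone_meets_A m /\ oscillates hinv L (cone_point m).
Proof.
  intros Ay Hu Hv Huy Hyv Hou Hov.
  destruct (lex_lt_near_r _ _ Huy) as [m1 Hm1]. destruct (lex_lt_near_l _ _ Hyv) as [m2 Hm2].
  set (t := prefix y (max m1 m2)).
  assert (Hc : cone_meets_A (h t)).
  { exists y. rewrite hinv_h. unfold t. rewrite prefix_length. auto. }
  exists (h t). split; auto.
  destruct (cone_point_spec _ Hc) as [Ha Hp]. rewrite hinv_h in Hp.
  unfold t in Hp. rewrite prefix_length in Hp.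
  assert (Hag : agree (max m1 m2) y (cone_point (h t))) by (apply agree_of_prefix; auto).
  apply (oscillates_between L u _ v); auto.
  - apply Hm1, (agree_mono (max m1 m2)); auto; lia.
  - apply Hm2, (agree_mono (max m1 m2)); auto; lia.
Qed.

Lemma candidate_least L y : ~ eventually_constant y -> oscillates hinv L y ->
  (forall z, ~ eventually_constant z -> lex_lt z y -> ~ oscillates hinv L z) ->
  least_above (threshold hinv) L = y.
Proof.
  intros Hy Ho Hnone. apply oscillates_iff_between in Ho as [HU HV]; auto.
  apply least_above_spec; auto. intros z Hz Hzy HUz. apply (Hnone z Hz Hzy).
  apply oscillates_iff_between; auto. split; auto. apply (below_down _ L y); auto.
Qed.

Lemma candidate_greatest L y : ~ eventually_constant y -> oscillates hinv L y ->
  (forall z, ~ eventually_constant z -> lex_lt y z -> ~ oscillates hinv L z) ->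
  greatest_below (threshold hinv) L = y.
Proof.
  intros Hy Ho Hnone. apply oscillates_iff_between in Ho as [HU HV]; auto.
  apply greatest_below_spec; auto. intros z Hz Hyz HVz. apply (Hnone z Hz Hyz).
  apply oscillates_iff_between; auto. split; auto. apply (above_up _ L y); auto.
Qed.

Lemma oscillation_candidate_complete L :
  (exists y, A y /\ oscillates hinv L y) -> oscillation_candidate L.
Proof.
  intros [y [Ay Ho]]. assert (Hy := HAnec y Ay).
  destruct (classic (exists u, ~ eventually_constant u /\ lex_lt u y /\ oscillates hinv L u))
    as [[u [Hu [Huy Hou]]]|Hbelow].
  - destruct (classic (exists v, ~ eventually_constant v /\ lex_lt y v /\ oscillates hinv L v))
      as [[v [Hv [Hyv Hov]]]|Habove].
    + left. apply (candidate_between L y u v); auto.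
    + right; right. rewrite (candidate_greatest L y); auto. intros z Hz Hyz Hoz. apply Habove; eauto.
  - right; left. rewrite (candidate_least L y); auto. intros z Hz Hzy Hoz. apply Hbelow; eauto.
Qed.

(* For Borel A, L_A is Borel in [N]: its complement there is the Borel set of
   L admitting an oscillation candidate. *)
Lemma LA_borel : borel_cantor A -> borel_in infinite_set (LA hinv A).
Proof.
  intros HAb. exists (fun L => ~ oscillation_candidate L).
  split; [apply borel_compl, oscillation_candidate_borel; auto|].
  intros L. rewrite LA_iff. split.
  - intros [Hi H]. split; auto. intros Hc.
    destruct (oscillation_candidate_sound L Hc) as [y [Ay Ho]]. apply (H y); auto.
  - intros [Hi H]. split; auto. intros y Ay Ho. apply H, oscillation_candidate_complete; eauto.
Qed.

End BorelCase.
End Enumeration.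

Theorem proposition5p5
  (h : list bool -> nat) (hinv : nat -> list bool)
  (h_hinv : forall n, h (hinv n) = n) (hinv_h : forall s, hinv (h s) = s)
  (h_mono : forall s t, (length s < length t)%nat -> (h s < h t)%nat)
  (A : cantor -> Prop)
  (HA : analytic_cantor A)
  (HAnec : forall x, A x -> ~ eventually_constant x) :
  (exists H : cantor -> cantor,
     cont_cc H /\ (forall x, infinite_set (H x)) /\
     (forall x, LA hinv A (H x) <-> ~ A x)) /\
  (Sigma11_complete A -> Pi11_complete_in infinite_set (LA hinv A)) /\
  (borel_cantor A -> borel_in infinite_set (LA hinv A)).
Proof.
  set (H := reduction hinv).
  assert (HLA : forall x, LA hinv A (H x) <-> ~ A x) by (intros x; apply (reduction_LA h); auto).
  split; [|split].
  - exists H. split; [apply reduction_cont|split; [apply (reduction_infinite h); auto|auto]].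
  - intros [_ Hcomplete]. split; [apply (LA_coanalytic h); auto|].
    intros X B HB. destruct (Hcomplete X (fun x => ~ B x) HB) as [g [Hg Hgr]].
    exists (fun x => H (g x)). split; [|split].
    + intros U HU. apply (Hg (fun z => U (H z))), cont_preimage_open; auto.
      apply reduction_cont.
    + intros x. apply (reduction_infinite h); auto.
    + intros x. rewrite HLA, <- Hgr. split; [tauto|apply NNPP].
  - apply (LA_borel h); auto.
Qed.
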